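(* Let $X$ be a finite set of even cardinality, $s:\mathfrak S_X\otimes_{\min}\mathfrak S_X\to\mathbb C$ a state, and $\tilde s=s\circ(q_C\otimes q_C)$, regarded as a state of $\mathcal S_{X,\mathbb Z_2}\otimes_{\rm c}\mathcal S_{X,\mathbb Z_2}$. Suppose the correlation $p_{\tilde s}(a,b|x,y)=\tilde s(e_{x,a}\otimes f_{y,b})$ is synchronous, i.e. $p_{\tilde s}(a,b|x,x)=0$ whenever $a\ne b$. Then $\tilde s$ is an abstract self-test for $\mathcal S_C$: there is exactly one state in $\mathcal S_C$ whose restriction to $\mathcal S_{X,\mathbb Z_2}\otimes\mathcal S_{X,\mathbb Z_2}$ equals $\tilde s$.
   Context: $\mathcal A_{X,\mathbb Z_2}$ is the universal unital C*-algebra generated by projections $e_{x,a}$ ($x\in X$, $a\in\mathbb Z_2$) with $e_{x,0}+e_{x,1}=1$; $\mathcal S_{X,\mathbb Z_2}=\mathrm{span}\{e_{x,a}\}$; in the second tensor factor the generators are written $f_{y,b}$. The Clifford algebra $\mathfrak C_X$ is the universal unital C*-algebra generated by self-adjoint unitaries $u_x$, $x\in X$, with $u_xu_y+u_yu_x=0$ for $x\ne y$. $q_C:\mathcal A_{X,\mathbb Z_2}\to\mathfrak C_X$ is the surjective *-homomorphism with $q_C(e_{x,0})=(1+u_x)/2$, $q_C(e_{x,1})=(1-u_x)/2$ (its kernel is the ideal generated by $e_{x,0}e_{y,0}+e_{y,0}e_{x,0}-e_{x,0}-e_{y,0}+\frac12$, $x\ne y$). $\mathfrak S_X=q_C(\mathcal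 S_{X,\mathbb Z_2})=\mathrm{span}\{1,u_x:x\in X\}\subseteq\mathfrak C_X$. $\mathcal S_C$ is the set of states of $\mathcal A_{X,\mathbb Z_2}\otimes_{\min}\mathcal A_{X,\mathbb Z_2}$ that factor through $q_C\otimes q_C:\mathcal A_{X,\mathbb Z_2}\otimes_{\min}\mathcal A_{X,\mathbb Z_2}\to\mathfrak C_X\otimes_{\min}\mathfrak C_X$. *)

From HB Require Import structures.
From mathcomp Require Import all_boot all_order all_algebra.
From mathcomp Require Import complex mxtens.
From mathcomp Require Import reals.
Set Implicit Arguments. Unset Strict Implicit. Unset Printing Implicit Defensive.
Import Order.TTheory GRing.Theory Num.Theory.
Local Open Scope ring_scope.

Section Defs.
Variable C : numClosedFieldType.

Definition adjmx m n (A : 'M[C]_(m, n)) : 'M[C]_(n, m) := (map_mx Num.conj_op A)^T.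

Definition psdmx n (A : 'M[C]_n) : Prop :=
  adjmx A = A /\ forall v : 'cV[C]_n, 0 <= (adjmx v *m A *m v) 0 0.

Variable X : finType.

(* A family of matrices u_x satisfying the Clifford relations: a
   unital *-representation of the Clifford algebra C_X on C^d. *)
Definition clifford_rep d (u : X -> 'M[C]_d) : Prop :=
  [/\ forall x, adjmx (u x) = u x,
      forall x, u x *m u x = 1%:M
    & forall x y, x != y -> u x *m u y + u y *m u x = 0].

Variable d : nat.
Variable u : X -> 'M[C]_d.

(* spanning set {1} U {u_x} of the operator system S_X, indexed by option X *)
Definition genS (i : option X) : 'M[C]_d :=
  if i is Some x then u x else 1%:M.

(* membership in  S_X (x)_min S_X  inside  M_d (x) M_d = M_(d*d) *)
Definition in_SS (M : 'M[C]_(d * d)) : Prop :=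
  exists c : option X -> option X -> C,
    M = \sum_(i : option X) \sum_(j : option X) c i j *: (genS i *t genS j).

(* Clifford monomial u_S (product in enumeration order), S a subset of X *)
Definition monomial (S : {set X}) : 'M[C]_d :=
  foldr (fun x M => u x *m M) 1%:M (enum S).

(* membership in C_X (x)_min C_X (the image of the representation)
   inside M_(d*d): span of the u_S (x) u_T *)
Definition in_CC (M : 'M[C]_(d * d)) : Prop :=
  exists c : {set X} -> {set X} -> C,
    M = \sum_(S : {set X}) \sum_(T : {set X}) c S T *: (monomial S *t monomial T).

Definition state_on (V : 'M[C]_(d * d) -> Prop) (s : 'M[C]_(d * d) -> C) : Prop :=
  [/\ forall (a : C) M N, V M -> V N -> s (a *: M + N) = a * s M + s N,
      s 1%:M = 1
    & forall M, V M -> psdmx M -> 0 <= s M].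

(* projection e_{x,a} under q_C followed by the representation:
   (1 + (-1)^a u_x)/2 *)
Definition proj (x : X) (a : bool) : 'M[C]_d :=
  2^-1 *: (1%:M + (if a then - u x else u x)).

Definition corr (s : 'M[C]_(d * d) -> C) (a b : bool) (x y : X) : C :=
  s (proj x a *t proj y b).

Definition synchronous (s : 'M[C]_(d * d) -> C) : Prop :=
  forall (x : X) (a b : bool), a != b -> corr s a b x x = 0.

End Defs.

(* Synchronicity of s gives s (u_x (x) u_x) = 1 for every x.  A state that
   takes the value 1 on a self-adjoint unitary w is invariant under
   multiplication by w (Cauchy-Schwarz with the projection (1 - w)/2), hence
   vanishes on every element anticommuting with w.  Since |X| is even, each
   u_S (x) u_T with S <> T anticommutes with some u_x (x) u_x, so every state
   of C_X (x) C_X extending s equals [S == T] on these spanning elements: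
   the extension is unique.  On the operator system S_X (x) S_X the same
   values are forced by positivity alone, and a common unit fixed vector of
   the commuting u_x (x) u_x (nonzero again because |X| is even) gives a
   vector state with these values, i.e. an extension of s. *)

From HB Require Import structures.
From mathcomp Require Import all_boot all_order all_algebra.
From mathcomp Require Import complex mxtens.
From mathcomp Require Import reals.
From mathcomp Require Import ring.
Import Order.TTheory GRing.Theory Num.Theory.
Local Open Scope ring_scope.
Set Implicit Arguments. Unset Strict Implicit. Unset Printing Implicit Defensive.

Section Scalars.
Variable C : numClosedFieldType.

Lemma real_quad_ge0_lin_eq0 (p g : C) : 0 <= g ->
  (forall t, t \is Num.real -> 0 <= t * p + t ^+ 2 * g) -> p = 0.
Proof.
move=> g_ge0 quad_ge0.
have gR : g \is Num.real := ger0_real g_ge0.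
have pR : p \is Num.real.
  have /ger0_real := quad_ge0 1 (rpred1 _).
  by rewrite mul1r expr1n mul1r (rpredDr _ gR).
have g1_gt0 : 0 < g + 1 by rewrite ltr_wpDl.
pose t := - (p / (g + 1)).
have tR : t \is Num.real by rewrite rpredN rpredM ?rpredV ?rpredD ?rpred1.
have : 0 <= - (p / (g + 1)) ^+ 2.
  have := quad_ge0 t tR; congr (_ <= _); rewrite /t; field.
  by rewrite gt_eqF.
rewrite oppr_ge0 => le0.
have : (p / (g + 1)) ^+ 2 == 0.
  by rewrite eq_le le0 real_exprn_even_ge0 // rpredM ?rpredV ?rpredD ?rpred1.
by rewrite sqrf_eq0 mulf_eq0 invr_eq0 (gt_eqF g1_gt0) orbF => /eqP.
Qed.

Lemma sesqui_quad_ge0_eq0 (a b g : C) : 0 <= g ->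
  (forall mu : C, 0 <= mu * a + mu^* * b + mu * mu^* * g) -> a = 0 /\ b = 0.
Proof.
move=> g_ge0 form_ge0.
have ab0 : a + b = 0.
  apply: (real_quad_ge0_lin_eq0 g_ge0) => t tR.
  by have := form_ge0 t; rewrite conj_Creal //; congr (_ <= _); ring.
have iab0 : 'i * (a - b) = 0.
  apply: (real_quad_ge0_lin_eq0 g_ge0) => t tR.
  have := form_ge0 ('i * t); rewrite rmorphM /= conjCi conj_Creal //.
  congr (_ <= _); rewrite -[RHS]addr0 -[in RHS](subrr (t ^+ 2 * g)).
  have -> : t ^+ 2 * g = - ('i ^+ 2) * t ^+ 2 * g by rewrite sqrCi opprK mul1r.
  ring.
move/eqP: iab0; rewrite mulf_eq0 (negbTE (neq0Ci _)) subr_eq0 => /eqP ab.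
move/eqP: ab0; rewrite ab -mulr2n -mulr_natr mulf_eq0 pnatr_eq0 orbF => /eqP b0.
by rewrite b0.
Qed.

Lemma opp_fixed_eq0 (x : C) : x = - x -> x = 0.
Proof. by move/eqP; rewrite -addr_eq0 -mulr2n mulrn_eq0 => /eqP. Qed.

End Scalars.

Section Tensor.
Variable R : comPzRingType.

Lemma tensmxDl m n p q (A B : 'M[R]_(m, n)) (D : 'M[R]_(p, q)) :
  (A + B) *t D = A *t D + B *t D.
Proof. by apply/matrixP => i j; rewrite !mxE mulrDl. Qed.

Lemma tensmxDr m n p q (A : 'M[R]_(m, n)) (B D : 'M[R]_(p, q)) :
  A *t (B + D) = A *t B + A *t D.
Proof. by apply/matrixP => i j; rewrite !mxE mulrDr. Qed.

Lemma tensmxZl m n p q k (A : 'M[R]_(m, n)) (D : 'M[R]_(p, q)) :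
  (k *: A) *t D = k *: (A *t D).
Proof. by apply/matrixP => i j; rewrite !mxE mulrA. Qed.

Lemma tensmxZr m n p q k (A : 'M[R]_(m, n)) (D : 'M[R]_(p, q)) :
  A *t (k *: D) = k *: (A *t D).
Proof. by apply/matrixP => i j; rewrite !mxE mulrCA. Qed.

Lemma tensmxNl m n p q (A : 'M[R]_(m, n)) (D : 'M[R]_(p, q)) :
  (- A) *t D = - (A *t D).
Proof. by apply/matrixP => i j; rewrite !mxE mulNr. Qed.

Lemma tensmxNr m n p q (A : 'M[R]_(m, n)) (D : 'M[R]_(p, q)) :
  A *t (- D) = - (A *t D).
Proof. by apply/matrixP => i j; rewrite !mxE mulrN. Qed.

Lemma tensmx11 m n : (1%:M : 'M[R]_m) *t (1%:M : 'M[R]_n) = 1%:M.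
Proof.
apply/matrixP => i j.
case: (mxtens_indexP i) => i0 i1; case: (mxtens_indexP j) => j0 j1.
rewrite tensmxE !mxE -natrM mulnb; congr ((_ : bool)%:R).
apply/andP/eqP => [[/eqP -> /eqP ->] //|/(congr1 (@mxtens_unindex _ _))].
by rewrite !mxtens_indexK => -[-> ->].
Qed.

End Tensor.

Section Adjoint.
Variable C : numClosedFieldType.

Lemma adjmxM m n p (A : 'M[C]_(m, n)) (B : 'M[C]_(n, p)) :
  adjmx (A *m B) = adjmx B *m adjmx A.
Proof. by rewrite /adjmx map_mxM trmx_mul. Qed.

Lemma adjmxD m n (A B : 'M[C]_(m, n)) : adjmx (A + B) = adjmx A + adjmx B.
Proof. by rewrite /adjmx map_mxD linearD. Qed.

Lemma adjmxZ m n (k : C) (A : 'M[C]_(m, n)) : adjmx (k *: A) = k^* *: adjmx A.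
Proof. by rewrite /adjmx map_mxZ linearZ. Qed.

Lemma adjmxN m n (A : 'M[C]_(m, n)) : adjmx (- A) = - adjmx A.
Proof. by rewrite /adjmx map_mxN linearN. Qed.

Lemma adjmx0 m n : adjmx (0 : 'M[C]_(m, n)) = 0.
Proof. by rewrite /adjmx map_mx0 trmx0. Qed.

Lemma adjmx1 n : adjmx (1%:M : 'M[C]_n) = 1%:M.
Proof. by apply/matrixP => i j; rewrite !mxE rmorph_nat eq_sym. Qed.

Lemma adjmxK m n (A : 'M[C]_(m, n)) : adjmx (adjmx A) = A.
Proof. by apply/matrixP => i j; rewrite !mxE conjCK. Qed.

Lemma adjmx_tens m n p q (A : 'M[C]_(m, n)) (B : 'M[C]_(p, q)) :
  adjmx (A *t B) = adjmx A *t adjmx B.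
Proof. by rewrite /adjmx map_mxT trmx_tens. Qed.

Lemma psdmx_gram n (B : 'M[C]_n) : psdmx (adjmx B *m B).
Proof.
split; first by rewrite adjmxM adjmxK.
move=> v; rewrite mulmxA -adjmxM -mulmxA !mxE; apply: sumr_ge0 => k _.
by rewrite !mxE mulrC mul_conjC_ge0.
Qed.

Lemma psdmxZ n (k : C) (B : 'M[C]_n) : 0 <= k -> psdmx B -> psdmx (k *: B).
Proof.
move=> k_ge0 [B_adj B_ge0]; split; first by rewrite adjmxZ B_adj conj_Creal // ger0_real.
by move=> v; rewrite -scalemxAr -scalemxAl mxE mulr_ge0.
Qed.

Lemma psdmx_anticomm_pencil m (W A : 'M[C]_m) (x y z : C) :
  adjmx W = W -> adjmx A = A -> W *m W = 1%:M -> A *m A = 1%:M ->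
  A *m W = - (W *m A) -> x \is Num.real -> y \is Num.real -> z \is Num.real ->
  0 < x -> x ^+ 2 = y ^+ 2 + z ^+ 2 -> psdmx (x *: 1%:M + y *: W + z *: A).
Proof.
move=> W_adj A_adj W_sq A_sq AW xR yR zR x_gt0 xyz.
set M := _ + _ + _.
have M_adj : adjmx M = M by rewrite !adjmxD !adjmxZ adjmx1 W_adj A_adj !conj_Creal.
have MM : M *m M = (2 * x) *: M.
  rewrite !mulmxDl !mulmxDr -!scalemxAl -!scalemxAr !scalerA !mul1mx !mulmx1.
  rewrite W_sq A_sq AW; move: (W *m A) => WA.
  apply/matrixP => i j; apply/eqP; rewrite -subr_eq0 !mxE; apply/eqP.
  transitivity ((y ^+ 2 + z ^+ 2 - x ^+ 2) * (i == j)%:R); first by ring.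
  by rewrite -xyz subrr mul0r.
have -> : M = (2 * x)^-1 *: (adjmx M *m M).
  by rewrite M_adj MM scalerA mulVf ?scale1r // mulf_neq0 ?pnatr_eq0 // gt_eqF.
by apply: psdmxZ; [rewrite invr_ge0 mulr_ge0 ?ler0n ?ltW | apply: psdmx_gram].
Qed.

End Adjoint.

Section Span.
Variables (C : numClosedFieldType) (I : finType) (m : nat) (B : I -> I -> 'M[C]_m).

Definition in_span2 (M : 'M[C]_m) : Prop :=
  exists c : I -> I -> C, M = \sum_i \sum_j c i j *: B i j.

Lemma in_span2_ind (P : 'M[C]_m -> Prop) :
  P 0 -> (forall M N, P M -> P N -> P (M + N)) -> (forall k i j, P (k *: B i j)) ->
  forall M, in_span2 M -> P M.
Proof.
move=> P0 PD PB _ [c ->]; elim/big_ind: _ => // i _.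
by elim/big_ind: _ => // j _.
Qed.

Lemma in_span2_0 : in_span2 0.
Proof.
exists (fun _ _ => 0); rewrite big1 // => i _.
by rewrite big1 // => j _; rewrite scale0r.
Qed.

Lemma in_span2D M N : in_span2 M -> in_span2 N -> in_span2 (M + N).
Proof.
move=> [c1 ->] [c2 ->]; exists (fun i j => c1 i j + c2 i j).
rewrite -big_split; apply: eq_bigr => i _; rewrite -big_split.
by apply: eq_bigr => j _; rewrite scalerDl.
Qed.

Lemma in_span2Z k M : in_span2 M -> in_span2 (k *: M).
Proof.
move=> [c ->]; exists (fun i j => k * c i j).
rewrite scaler_sumr; apply: eq_bigr => i _; rewrite scaler_sumr.
by apply: eq_bigr => j _; rewrite scalerA.
Qed.

Lemma in_span2N M : in_span2 M -> in_span2 (- M).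
Proof. by rewrite -scaleN1r; apply: in_span2Z. Qed.

Lemma in_span2_gen i j : in_span2 (B i j).
Proof.
exists (fun i' j' => ((i' == i) && (j' == j))%:R).
rewrite (bigD1 i) //= (bigD1 j) //= !eqxx scale1r big1 => [|j' /negbTE ->].
  rewrite big1 ?addr0 // => i' /negbTE ->.
  by rewrite big1 // => j' _; rewrite scale0r.
by rewrite andbF scale0r.
Qed.

End Span.

Section StateLinear.
Variables (C : numClosedFieldType) (n : nat) (V : 'M[C]_(n * n) -> Prop).
Variable s : 'M[C]_(n * n) -> C.
Hypotheses (s_state : state_on V s) (V0 : V 0).

Lemma state0 : s 0 = 0.
Proof.
have [s_lin _ _] := s_state; have := s_lin 1 0 0 V0 V0.
by rewrite scale1r addr0 mul1r => e; apply: (addIr (s 0)); rewrite add0r -e.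
Qed.

Lemma stateD M N : V M -> V N -> s (M + N) = s M + s N.
Proof. by have [s_lin _ _] := s_state => VM VN; rewrite -[M]scale1r s_lin // mul1r scale1r. Qed.

Lemma stateZ k M : V M -> s (k *: M) = k * s M.
Proof. by have [s_lin _ _] := s_state => VM; rewrite -[_ *: M]addr0 s_lin // state0 addr0. Qed.

End StateLinear.

Lemma state_span2_eq (C : numClosedFieldType) (I : finType) n
    (B : I -> I -> 'M[C]_(n * n)) (s1 s2 : 'M[C]_(n * n) -> C) :
  state_on (in_span2 B) s1 -> state_on (in_span2 B) s2 ->
  (forall i j, s1 (B i j) = s2 (B i j)) -> forall M, in_span2 B M -> s1 M = s2 M.
Proof.
move=> s1_state s2_state eq_gen M VM; have V0 := in_span2_0 B.
suff [] : in_span2 B M /\ s1 M = s2 M by [].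
elim/in_span2_ind: M / VM => [|M N [VM eqM] [VN eqN]|k i j].
- by rewrite (state0 s1_state) ?(state0 s2_state).
- by split; [apply: in_span2D | rewrite (stateD s1_state) ?(stateD s2_state) ?eqM ?eqN].
have Vgen := in_span2_gen B i j.
by split; [apply: in_span2Z | rewrite (stateZ s1_state) ?(stateZ s2_state) ?eq_gen].
Qed.

Section VectorState.
Variables (C : numClosedFieldType) (n : nat).

Lemma cV_norm2_gt0 m (c : 'cV[C]_m) : c != 0 -> 0 < (adjmx c *m c) 0 0.
Proof.
move=> c_neq0; have [i ci] : exists i, c i 0 != 0.
  apply/existsP; apply: contraNT c_neq0; rewrite negb_exists => /forallP c0.
  by apply/eqP/matrixP => i j; rewrite ord1 mxE; apply/eqP/negPn/c0.
have ge0 k : 0 <= adjmx c 0 k * c k 0 by rewrite !mxE mulrC mul_conjC_ge0.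
rewrite lt_def mxE sumr_ge0 // andbT; apply/eqP => /psumr_eq0P/(_ i isT).
rewrite /= mxE => /(_ (fun k _ => ge0 k)) /eqP.
by rewrite mxE mulrC mulf_eq0 conjC_eq0 orbb (negbTE ci).
Qed.

Definition vector_state (c : 'cV[C]_(n * n)) (M : 'M[C]_(n * n)) : C :=
  (adjmx c *m M *m c) 0 0 / (adjmx c *m c) 0 0.

Lemma vector_state_on V c : c != 0 -> state_on V (vector_state c).
Proof.
move=> c_neq0; have nc_gt0 := cV_norm2_gt0 c_neq0; split.
- move=> k M N _ _; rewrite /vector_state mulmxDr mulmxDl -scalemxAr -scalemxAl.
  by rewrite !mxE mulrDl mulrA.
- by rewrite /vector_state mulmx1 divff // gt_eqF.
- by move=> M _ [_ M_ge0]; rewrite /vector_state divr_ge0 // ltW.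
Qed.

Lemma vector_state_fix c M : c != 0 -> M *m c = c -> vector_state c M = 1.
Proof.
move=> c_neq0 Mc; have nc_gt0 := cV_norm2_gt0 c_neq0.
by rewrite /vector_state -mulmxA Mc divff // gt_eqF.
Qed.

End VectorState.

Section StateOnSubspace.
Variables (C : numClosedFieldType) (n : nat) (V : 'M[C]_(n * n) -> Prop).
Hypotheses (V1 : V 1%:M) (VD : forall M N, V M -> V N -> V (M + N))
  (VZ : forall k M, V M -> V (k *: M)).
Variable phi : 'M[C]_(n * n) -> C.
Hypothesis phi_state : state_on V phi.

Let V0 : V 0. Proof. by rewrite -(scale0r 1%:M); apply: VZ. Qed.
Let VN M : V M -> V (- M). Proof. by rewrite -scaleN1r; apply: VZ. Qed.
Let phi1 : phi 1%:M = 1. Proof. by case: phi_state. Qed.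
Let phiD := stateD phi_state.
Let phiZ := stateZ phi_state V0.
Let phiB M N : V M -> V N -> phi (M - N) = phi M - phi N.
Proof.
move=> VM VN'; have := phiZ (-1) VN'; rewrite scaleN1r mulN1r => phiN.
by rewrite phiD ?phiN //; apply: VN.
Qed.

(* For real t, (1 + t^2) - (1 - t^2) W - 2 t A is a positive multiple of a
   projection, and it lies in the operator system V. *)
Lemma state_anticomm_unitary_eq0 W A : V W -> V A ->
  adjmx W = W -> adjmx A = A -> W *m W = 1%:M -> A *m A = 1%:M ->
  A *m W = - (W *m A) -> phi W = 1 -> phi A = 0.
Proof.
move=> VW VA W_adj A_adj W_sq A_sq AW phiW.
have [_ _ phi_ge0] := phi_state.
suff : - (2 * phi A) = 0.
  by move/eqP; rewrite oppr_eq0 mulf_eq0 pnatr_eq0 => /eqP.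
apply: (@real_quad_ge0_lin_eq0 _ _ 2%:R); first by rewrite ler0n.
move=> t tR.
have rR : 1 + t ^+ 2 \is Num.real by rewrite rpredD ?rpred1 ?rpredX.
have yR : - (1 - t ^+ 2) \is Num.real by rewrite rpredN rpredB ?rpred1 ?rpredX.
have zR : - (2 * t) \is Num.real by rewrite rpredN rpredM ?rpred_nat.
have r_gt0 : 0 < 1 + t ^+ 2.
  by rewrite (lt_le_trans ltr01) // lerDl real_exprn_even_ge0.
pose M := (1 + t ^+ 2) *: 1%:M + (- (1 - t ^+ 2)) *: W + (- (2 * t)) *: A.
have VMt : V M by apply: VD; [apply: VD|]; apply: VZ.
have psdM : psdmx M.
  by apply: psdmx_anticomm_pencil => //; ring.
have := phi_ge0 M VMt psdM.
rewrite /M !phiD ?phiZ ?phi1 ?phiW; first by congr (_ <= _); ring.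
all: by do ?[apply: VD | apply: VZ].
Qed.

Section Rigidity.
Hypotheses (VM : forall M N, V M -> V N -> V (M *m N))
  (Vadj : forall M, V M -> V (adjmx M)).
Variable w : 'M[C]_(n * n).
Hypotheses (Vw : V w) (w_adj : adjmx w = w) (w_sq : w *m w = 1%:M) (phi_w : phi w = 1).

(* Cauchy-Schwarz for the projection 1 - w, on which phi vanishes. *)
Let phi_compl_mul B : V B ->
  phi ((1%:M - w) *m B) = 0 /\ phi (adjmx B *m (1%:M - w)) = 0.
Proof.
move=> VB; have [_ _ phi_ge0] := phi_state.
set Y := 1%:M - w.
have VY : V Y by apply: VD; [apply: V1 | apply: VN].
have Y_adj : adjmx Y = Y by rewrite adjmxD adjmxN adjmx1 w_adj.
have Y_sq : Y *m Y = 2%:R *: Y.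
  by rewrite mulmxBl !mulmxBr w_sq !mul1mx mulmx1 opprB scaler_nat mulr2n.
have phiY : phi Y = 0 by rewrite phiB // phi1 phi_w subrr.
clearbody Y.
apply: (sesqui_quad_ge0_eq0 (phi_ge0 _ (VM (Vadj VB) VB) (psdmx_gram B))) => mu.
have VYB : V (Y + mu *: B) by apply: VD; last apply: VZ.
have := phi_ge0 _ (VM (Vadj VYB) VYB) (psdmx_gram _).
have -> : adjmx (Y + mu *: B) *m (Y + mu *: B) = 2%:R *: Y + mu *: (Y *m B)
    + mu^* *: (adjmx B *m Y) + (mu * mu^*) *: (adjmx B *m B).
  rewrite adjmxD adjmxZ Y_adj mulmxDl !mulmxDr Y_sq -!scalemxAl -!scalemxAr.
  by rewrite scalerA [mu^* * mu]mulrC !addrA.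
rewrite !phiD ?phiZ ?phiY ?mulr0 ?add0r //.
all: by do ?[apply: VD | apply: VZ | apply: VM | apply: Vadj].
Qed.

Lemma state_mulw_l B : V B -> phi (w *m B) = phi B.
Proof.
move=> VB; have VwB : V (w *m B) by apply: VM.
have [+ _] := phi_compl_mul VB.
by rewrite mulmxBl mul1mx phiB // => /eqP; rewrite subr_eq0 => /eqP.
Qed.

Lemma state_mulw_r B : V B -> phi (B *m w) = phi B.
Proof.
move=> VB; have VBw : V (B *m w) by apply: VM.
have [_ +] := phi_compl_mul (Vadj VB).
by rewrite adjmxK mulmxBr mulmx1 phiB // => /eqP; rewrite subr_eq0 => /eqP.
Qed.

Lemma state_anticomm_eq0 A : V A -> A *m w = - (w *m A) -> phi A = 0.
Proof.
move=> VA Aw; apply: opp_fixed_eq0.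
by rewrite -{1}(state_mulw_r VA) Aw -scaleN1r phiZ ?(state_mulw_l VA) ?mulN1r //; apply: VM.
Qed.

End Rigidity.
End StateOnSubspace.

Section SpanAlgebra.
Variables (C : numClosedFieldType) (I : finType) (m : nat) (B : I -> I -> 'M[C]_m).

Lemma in_span2M :
  (forall i j i' j', in_span2 B (B i j *m B i' j')) ->
  forall M N, in_span2 B M -> in_span2 B N -> in_span2 B (M *m N).
Proof.
move=> BB M N VM VN; elim/in_span2_ind: M / VM => [|M1 M2 V1 V2|k i j].
- by rewrite mul0mx; apply: in_span2_0.
- by rewrite mulmxDl; apply: in_span2D.
rewrite -scalemxAl; apply: in_span2Z.
elim/in_span2_ind: N / VN => [|N1 N2 V1 V2|k' i' j'].
- by rewrite mulmx0; apply: in_span2_0.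
- by rewrite mulmxDr; apply: in_span2D.
by rewrite -scalemxAr; apply: in_span2Z.
Qed.

Lemma in_span2_adj :
  (forall i j, in_span2 B (adjmx (B i j))) ->
  forall M, in_span2 B M -> in_span2 B (adjmx M).
Proof.
move=> Badj M; elim/in_span2_ind => [|M1 M2 V1 V2|k i j].
- by rewrite adjmx0; apply: in_span2_0.
- by rewrite adjmxD; apply: in_span2D.
by rewrite adjmxZ; apply: in_span2Z.
Qed.

End SpanAlgebra.

Lemma odd_cardsD1 (X : finType) x (S : {set X}) :
  odd #|S :\ x| = odd #|S| (+) (x \in S).
Proof. by rewrite (cardsD1 x S) oddD oddb; case: (x \in S); case: (odd _). Qed.

Lemma exists_odd_cardsD1 (X : finType) (S T : {set X}) :
  ~~ odd #|X| -> S != T -> exists x, odd (#|S :\ x| + #|T :\ x|).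
Proof.
move=> X_even neST.
suff [x Sx_Tx] : exists x, odd #|S| (+) (x \in S) (+) (odd #|T| (+) (x \in T)).
  by exists x; rewrite oddD !odd_cardsD1.
have [z zST] : exists z, (z \in S) != (z \in T).
  apply/existsP; apply: contraNT neST; rewrite negb_exists => /forallP eqST.
  by apply/eqP/setP => y; move/negPn/eqP: (eqST y).
have [/eqP eST | neST'] := boolP (odd #|S| == odd #|T|).
  by exists z; rewrite eST; move: zST; case: (z \in S); case: (z \in T); case: (odd _).
have [x /eqP xST | noeq] := pickP (fun x => (x \in S) == (x \in T)).
  by exists x; rewrite xST; move: neST'; case: (x \in T); case: (odd #|S|); case: (odd _).
have TC : T = ~: S.
  by apply/setP => x; rewrite inE; move: (noeq x) => /=; case: (x \in S); case: (x \in T).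
move: neST' X_even; rewrite TC -(cardsC S) oddD.
by case: (odd #|S|); case: (odd _).
Qed.

Lemma exists_odd_superset (X : finType) (A : {set X}) z :
  ~~ odd #|X| -> z \notin A -> exists S : {set X}, [/\ odd #|S|, A \subset S & z \notin S].
Proof.
move=> X_even zA; have [oddA | evenA] := boolP (odd #|A|); first by exists A.
have : (0 < #|~: (z |: A)|)%N.
  rewrite lt0n; apply: contraNneq X_even => C0.
  by rewrite -(cardsC (z |: A)) C0 addn0 cardsU1 zA oddD /= (negbTE evenA).
case/card_gt0P => y; rewrite in_setC in_setU1 negb_or => /andP[yz yA].
exists (y |: A); split; last by rewrite in_setU1 negb_or eq_sym yz.
- by rewrite cardsU1 yA oddD /= (negbTE evenA).
- exact: subsetUr.
Qed.

Lemma scalar_mx1_neq0 (R : nzRingType) n : (0 < n)%N -> (1%:M : 'M[R]_n) != 0.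
Proof. by case: n => // n _; apply: matrix_nonzero1. Qed.

Section Clifford.
Variables (C : numClosedFieldType) (X : finType) (d : nat) (u : X -> 'M[C]_d).
Hypothesis u_rep : clifford_rep u.

Lemma u_adj x : adjmx (u x) = u x. Proof. by case: u_rep. Qed.
Lemma u_sq x : u x *m u x = 1%:M. Proof. by case: u_rep. Qed.
Lemma u_anticomm x y : x != y -> u x *m u y = - (u y *m u x).
Proof. by move=> xy; case: u_rep => _ _ /(_ x y xy) /eqP; rewrite addr_eq0 => /eqP. Qed.

Definition uprod (l : seq X) : 'M[C]_d := foldr (fun x M => u x *m M) 1%:M l.

Lemma uprod_cat l1 l2 : uprod (l1 ++ l2) = uprod l1 *m uprod l2.
Proof. by elim: l1 => [|x l1 IH] /=; rewrite ?mul1mx // IH mulmxA. Qed.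

Lemma uprod_adj l : adjmx (uprod l) = uprod (rev l).
Proof.
elim: l => [|x l IH] /=; first exact: adjmx1.
by rewrite adjmxM IH u_adj rev_cons -cats1 uprod_cat /= mulmx1.
Qed.

Lemma uprod_unitary l : adjmx (uprod l) *m uprod l = 1%:M.
Proof.
elim: l => [|x l IH] /=; first by rewrite adjmx1 mulmx1.
by rewrite adjmxM u_adj -mulmxA [u x *m (u x *m _)]mulmxA u_sq mul1mx.
Qed.

(* u x commutes with itself and anticommutes with every other generator. *)
Lemma uprod_mulu l x : uprod l *m u x = (-1) ^+ count (predC1 x) l *: (u x *m uprod l).
Proof.
elim: l => [|y l IH] /=; first by rewrite mulmx1 mul1mx scale1r.
rewrite -mulmxA IH -scalemxAr.
have [->|yx] := eqVneq y x; first by rewrite add0n.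
by rewrite !mulmxA (u_anticomm yx) mulNmx scalerN exprS mulN1r scaleNr.
Qed.

Lemma mulu_uprod_filter (l : seq X) x (p q : pred X) : uniq l -> x \in l ->
  (forall y, y != x -> p y = q y) -> p x != q x ->
  exists e : C, u x *m uprod (filter p l) = e *: uprod (filter q l).
Proof.
elim: l => [//|y l IH] /= /andP[yl ul] xin pq px.
have [exy|nxy] := eqVneq x y.
  subst y; have -> : filter p l = filter q l.
    by apply: eq_in_filter => z zl; apply: pq; apply: contraNneq yl => <-.
  exists 1; rewrite scale1r.
  by case: (p x) (q x) px => [] [] //= _; rewrite mulmxA u_sq mul1mx.
move: xin; rewrite in_cons (negbTE nxy) /= => xin.
have [e He] := IH ul xin pq px.
rewrite -(pq y) 1?eq_sym //; case: (p y) => /=; last by exists e.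
by exists (- e); rewrite mulmxA u_anticomm // mulNmx -mulmxA He scalemxAr scaleNr mulmxN.
Qed.

Lemma monomialE S : monomial u S = uprod (enum S). Proof. by []. Qed.

Lemma mulu_monomial x S : exists T (e : C), u x *m monomial u S = e *: monomial u T.
Proof.
exists [set y | if y == x then x \notin S else y \in S].
apply: mulu_uprod_filter; first by rewrite -enumT enum_uniq.
- by rewrite -enumT mem_enum.
- by move=> y /negbTE yx; rewrite !inE yx.
by rewrite !inE eqxx; case: (x \in S).
Qed.

Lemma uprod_mul_monomial l S : exists T (e : C), uprod l *m monomial u S = e *: monomial u T.
Proof.
elim: l => [|x l [T [e IH]]] /=; first by exists S, 1; rewrite mul1mx scale1r.
have [T' [e' HT']] := mulu_monomial x T.
by exists T', (e * e'); rewrite -mulmxA IH -scalemxAr HT' scalerA.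
Qed.

Lemma monomial_mulu x S :
  monomial u S *m u x = (-1) ^+ #|S :\ x| *: (u x *m monomial u S).
Proof.
rewrite monomialE uprod_mulu; congr (_ ^+ _ *: _).
apply/(@addnI (x \in S)); rewrite -cardsD1 cardE -(count_predC (pred1 x)).
by rewrite (count_uniq_mem _ (enum_uniq _)) mem_enum.
Qed.

Lemma monomial_mul S T : exists U (e : C), monomial u S *m monomial u T = e *: monomial u U.
Proof. exact: uprod_mul_monomial. Qed.

Lemma monomial0 : monomial u set0 = 1%:M.
Proof. by rewrite monomialE enum_set0. Qed.

Lemma monomial1 x : monomial u [set x] = u x.
Proof. by rewrite monomialE enum_set1 /= mulmx1. Qed.

Lemma monomial_adj S : exists U (e : C), adjmx (monomial u S) = e *: monomial u U.
Proof. by rewrite monomialE uprod_adj -[uprod _]mulmx1 -monomial0; apply: uprod_mul_monomial. Qed.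

Definition oset (i : option X) : {set X} := if i is Some x then [set x] else set0.

Lemma oset_inj : injective oset.
Proof.
have set1_neq0 x : [set x] != set0 :> {set X} by apply/set0Pn; exists x; rewrite inE.
case=> [x|] [y|] //= => [/set1_inj -> // | /eqP | /esym/eqP];
  by rewrite (negbTE (set1_neq0 _)).
Qed.

Lemma genS_monomial i : genS u i = monomial u (oset i).
Proof. by case: i => [x|] /=; rewrite ?monomial1 ?monomial0. Qed.

(* in_CC u and in_SS u unfold to in_span2 CCgen and in_span2 SSgen. *)
Local Notation CCgen := (fun S T => monomial u S *t monomial u T).
Local Notation SSgen := (fun i j => genS u i *t genS u j).

Lemma in_CC_1 : in_CC u 1%:M.
Proof. by rewrite -tensmx11 -monomial0; apply: (in_span2_gen CCgen). Qed.

Lemma in_CC_mul M N : in_CC u M -> in_CC u N -> in_CC u (M *m N).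
Proof.
apply: (in_span2M (B := CCgen)) => S T S' T' /=; rewrite tensmx_mul.
have [U [e ->]] := monomial_mul S S'; have [U' [e' ->]] := monomial_mul T T'.
by rewrite tensmxZl tensmxZr; do 2 apply: in_span2Z; apply: in_span2_gen.
Qed.

Lemma in_CC_adj M : in_CC u M -> in_CC u (adjmx M).
Proof.
apply: (in_span2_adj (B := CCgen)) => S T /=; rewrite adjmx_tens.
have [U [e ->]] := monomial_adj S; have [U' [e' ->]] := monomial_adj T.
by rewrite tensmxZl tensmxZr; do 2 apply: in_span2Z; apply: in_span2_gen.
Qed.

Definition uu x := u x *t u x.

Lemma uu_adj x : adjmx (uu x) = uu x.
Proof. by rewrite adjmx_tens u_adj. Qed.

Lemma uu_sq x : uu x *m uu x = 1%:M.
Proof. by rewrite tensmx_mul u_sq tensmx11. Qed.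

Lemma in_SS_uu x : in_SS u (uu x).
Proof. exact: (in_span2_gen SSgen (Some x) (Some x)). Qed.

Lemma in_CC_uu x : in_CC u (uu x).
Proof. by rewrite /uu -monomial1; apply: (in_span2_gen CCgen). Qed.

Lemma monomial_tens_anticomm S T : ~~ odd #|X| -> S != T ->
  exists x, (monomial u S *t monomial u T) *m uu x =
            - (uu x *m (monomial u S *t monomial u T)).
Proof.
move=> X_even /(exists_odd_cardsD1 X_even) [x oddST]; exists x.
rewrite !tensmx_mul !monomial_mulu tensmxZl tensmxZr scalerA -exprD.
by rewrite -signr_odd oddST expr1 scaleN1r.
Qed.

Lemma genS_adj i : adjmx (genS u i) = genS u i.
Proof. by case: i => [x|] /=; rewrite ?u_adj ?adjmx1. Qed.

Lemma genS_sq i : genS u i *m genS u i = 1%:M.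
Proof. by case: i => [x|] /=; rewrite ?u_sq ?mulmx1. Qed.

Lemma in_SS_1 : in_SS u 1%:M.
Proof. by rewrite -tensmx11; apply: (in_span2_gen SSgen None None). Qed.

Lemma state_SS_gen f :
  ~~ odd #|X| -> state_on (in_SS u) f -> (forall x, f (uu x) = 1) ->
  forall i j, f (genS u i *t genS u j) = (i == j)%:R.
Proof.
move=> X_even f_state f_uu i j.
have [<-|neij] := eqVneq i j.
  by case: i => [x|] /=; [apply: f_uu | rewrite tensmx11; case: f_state].
have [x anti] : exists x,
    (genS u i *t genS u j) *m uu x = - (uu x *m (genS u i *t genS u j)).
  rewrite !genS_monomial; apply: monomial_tens_anticomm => //.
  by apply: contra_neq neij => /oset_inj.
apply: (state_anticomm_unitary_eq0 in_SS_1 (@in_span2D _ _ _ SSgen) (@in_span2Z _ _ _ SSgen)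
  f_state (in_SS_uu x) (in_span2_gen SSgen i j) (uu_adj x) _ (uu_sq x) _ anti (f_uu x)).
- by rewrite adjmx_tens !genS_adj.
- by rewrite tensmx_mul !genS_sq tensmx11.
Qed.

Lemma in_CC_uprod_tens l : in_CC u (uprod l *t uprod l).
Proof.
elim: l => [|x l IH] /=; first by rewrite tensmx11; apply: in_CC_1.
by rewrite -tensmx_mul; apply: in_CC_mul => //; apply: in_CC_uu.
Qed.

Lemma state_CC_gen phi :
  ~~ odd #|X| -> state_on (in_CC u) phi -> (forall x, phi (uu x) = 1) ->
  forall S T, phi (monomial u S *t monomial u T) = (S == T)%:R.
Proof.
move=> X_even phi_state phi_uu S T.
have [<-|neST] := eqVneq S T.
  rewrite monomialE; elim: (enum S) => [|x l IH] /=.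
    by rewrite tensmx11; case: phi_state.
  rewrite -tensmx_mul (state_mulw_l in_CC_1 (@in_span2D _ _ _ CCgen) (@in_span2Z _ _ _ CCgen)
    phi_state in_CC_mul in_CC_adj (in_CC_uu x) (uu_adj x) (uu_sq x) (phi_uu x)) //.
  exact: in_CC_uprod_tens.
have [x anti] := monomial_tens_anticomm X_even neST.
exact: (state_anticomm_eq0 in_CC_1 (@in_span2D _ _ _ CCgen) (@in_span2Z _ _ _ CCgen)
  phi_state in_CC_mul in_CC_adj (in_CC_uu x) (uu_adj x) (uu_sq x) (phi_uu x)
  (in_span2_gen CCgen S T) anti).
Qed.

Lemma synchronous_uu s :
  state_on (in_SS u) s -> synchronous u s -> forall x, s (uu x) = 1.
Proof.
move=> s_state s_sync x; have V0 := in_span2_0 SSgen.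
have in_SS_proj a b : in_SS u (proj u x a *t proj u x b).
  rewrite /proj tensmxZl tensmxZr !(tensmxDl, tensmxDr); do 2 apply: in_span2Z.
  by case: a; case: b; rewrite ?tensmxNl ?tensmxNr; do ?[apply: in_span2D | apply: in_span2N];
    first [exact: (in_span2_gen SSgen None None) | exact: (in_span2_gen SSgen None (Some x))
          | exact: (in_span2_gen SSgen (Some x) None) | exact: (in_SS_uu x)].
have sum_proj : proj u x false *t proj u x true + proj u x true *t proj u x false =
    (2^-1 : C) *: (1%:M - uu x).
  by rewrite -tensmx11 /proj /uu; apply/matrixP => i j; rewrite !mxE; field.
have s1 : s 1%:M = 1 by case: s_state.
have sN : s (- uu x) = - s (uu x).
  by rewrite -scaleN1r (stateZ s_state V0) ?mulN1r //; apply: in_SS_uu.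
have V1uu : in_SS u (1%:M - uu x).
  by apply: in_span2D; [apply: in_SS_1 | apply: in_span2N; apply: in_SS_uu].
have e1 := s_sync x false true isT; have e2 := s_sync x true false isT.
rewrite /corr in e1 e2.
have := congr1 s sum_proj.
rewrite (stateD s_state) ?in_SS_proj // (stateZ s_state V0) // e1 e2 addr0.
rewrite (stateD s_state) ?sN ?s1; [|apply: in_SS_1 | apply: in_span2N; apply: in_SS_uu].
by move/esym/eqP; rewrite mulf_eq0 invr_eq0 pnatr_eq0 subr_eq0 => /eqP.
Qed.

Lemma uu_comm x y : uu x *m uu y = uu y *m uu x.
Proof.
have [->//|nxy] := eqVneq x y.
by rewrite !tensmx_mul (u_anticomm nxy) tensmxNl tensmxNr opprK.
Qed.

(* 2 ^ size l times the projection onto the common fixed space of the uu x, x in l. *)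
Definition uu_fix (l : seq X) : 'M[C]_(d * d) :=
  foldr (fun x M => (1%:M + uu x) *m M) 1%:M l.

Lemma uu_mul_fix x l : x \in l -> uu x *m uu_fix l = uu_fix l.
Proof.
elim: l => [//|y l IH]; rewrite in_cons /= => /orP[/eqP ->|xl].
  by rewrite mulmxA mulmxDr mulmx1 uu_sq addrC.
rewrite mulmxA mulmxDr mulmx1 uu_comm -{1}[uu x]mul1mx -mulmxDl -mulmxA IH //.
Qed.

Lemma uu_fix_comm (a : 'M[C]_(d * d)) l :
  (forall x, x \in l -> a *m uu x = uu x *m a) -> a *m uu_fix l = uu_fix l *m a.
Proof.
elim: l => [|x l IH] a_comm /=; first by rewrite mulmx1 mul1mx.
have a_comm_l y : y \in l -> a *m uu y = uu y *m a.
  by move=> yl; apply: a_comm; rewrite in_cons yl orbT.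
rewrite mulmxA mulmxDr mulmx1 a_comm ?mem_head // -{1}[a]mul1mx -mulmxDl.
by rewrite -!mulmxA IH.
Qed.

(* A monomial of odd degree containing l but not z commutes with every uu x,
   x in l, and anticommutes with uu z; it is invertible, so the factor
   1 + uu z cannot annihilate uu_fix l. *)
Lemma uu_fix_neq0 l : ~~ odd #|X| -> (0 < d)%N -> uniq l -> uu_fix l != 0.
Proof.
move=> X_even d_gt0; elim: l => [_|z l IH /andP[zl ul]] /=.
  by apply: scalar_mx1_neq0; rewrite muln_gt0 d_gt0.
have zl' : z \notin [set x in l] by rewrite inE.
have [S [oddS lS zS]] := exists_odd_superset X_even zl'.
pose a : 'M[C]_(d * d) := monomial u S *t 1%:M.
have a_comm x : x \in l -> a *m uu x = uu x *m a.
  move=> xl; have xS : x \in S by apply: (subsetP lS); rewrite inE.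
  rewrite /a !tensmx_mul monomial_mulu mul1mx mulmx1.
  by rewrite -signr_odd odd_cardsD1 xS addbT oddS expr0 scale1r.
have a_anti : a *m uu z = - (uu z *m a).
  rewrite /a !tensmx_mul monomial_mulu mul1mx mulmx1 -signr_odd odd_cardsD1.
  by rewrite (negbTE zS) addbF oddS expr1 scaleN1r tensmxNl.
have a_unit : (adjmx (monomial u S) *t 1%:M) *m a = 1%:M.
  by rewrite tensmx_mul monomialE uprod_unitary mul1mx tensmx11.
apply/eqP => fix0; move/eqP: (IH ul); apply.
have : (2%:R : C) *: (a *m uu_fix l) = 0.
  rewrite scalemxAl.
  have -> : (2%:R : C) *: a = (1%:M + uu z) *m a + a *m (1%:M + uu z).
    by rewrite mulmxDl mulmxDr mul1mx mulmx1 a_anti addrACA subrr addr0 scaler_nat mulr2n.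
  rewrite (mulmxDl ((1%:M + uu z) *m a)) -!mulmxA (uu_fix_comm a_comm).
  by rewrite (mulmxA (1%:M + uu z)) fix0 mul0mx mulmx0 addr0.
move/eqP; rewrite scaler_eq0 pnatr_eq0 /= => /eqP aF.
by rewrite -[uu_fix l]mul1mx -a_unit -mulmxA aF mulmx0.
Qed.

Lemma uu_common_fixed : ~~ odd #|X| -> (0 < d)%N ->
  exists c : 'cV[C]_(d * d), c != 0 /\ forall x, uu x *m c = c.
Proof.
move=> X_even d_gt0; set Q := uu_fix (enum X).
have Q_neq0 : Q != 0 := uu_fix_neq0 X_even d_gt0 (enum_uniq _).
have [j cj] : exists j, col j Q != 0.
  apply/existsP; rewrite -negb_forall; apply: contra Q_neq0 => /forallP colQ0.
  by apply/eqP/matrixP => i j; move/eqP/matrixP: (colQ0 j) => /(_ i 0); rewrite !mxE.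
exists (col j Q); split => // x.
by rewrite !colE mulmxA uu_mul_fix // mem_enum.
Qed.

End Clifford.

Theorem mainTheorem17 (R : realType) (X : finType) (d : nat)
    (u : X -> 'M[R[i]]_d) (s : 'M[R[i]]_(d * d) -> R[i]) :
  ~~ odd #|X| ->
  (0 < d)%N ->
  clifford_rep u ->
  state_on (in_SS u) s ->
  synchronous u s ->
  (exists phi : 'M[R[i]]_(d * d) -> R[i],
      state_on (in_CC u) phi /\ forall M, in_SS u M -> phi M = s M) /\
  (forall phi1 phi2 : 'M[R[i]]_(d * d) -> R[i],
      state_on (in_CC u) phi1 -> (forall M, in_SS u M -> phi1 M = s M) ->
      state_on (in_CC u) phi2 -> (forall M, in_SS u M -> phi2 M = s M) ->
      forall M, in_CC u M -> phi1 M = phi2 M).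
Proof.
move=> X_even d_gt0 u_rep s_state s_sync.
have s_uu := synchronous_uu s_state s_sync.
split.
  have [c [c_neq0 c_fix]] := uu_common_fixed u_rep X_even d_gt0.
  have c_state V : state_on V (vector_state c) := vector_state_on V c_neq0.
  exists (vector_state c); split => //.
  apply: (state_span2_eq (c_state _) s_state) => i j.
  rewrite (state_SS_gen u_rep X_even s_state) //.
  by rewrite (state_SS_gen u_rep X_even (c_state _)) // => x; apply: vector_state_fix.
move=> phi1 phi2 phi1_state phi1_s phi2_state phi2_s.
have phi_uu phi : (forall M, in_SS u M -> phi M = s M) -> forall x, phi (uu u x) = 1.
  by move=> phi_s x; rewrite phi_s ?s_uu //; apply: in_SS_uu.
apply: (state_span2_eq phi1_state phi2_state) => S T.
by rewrite (state_CC_gen u_rep X_even phi1_state (phi_uu _ phi1_s))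
  (state_CC_gen u_rep X_even phi2_state (phi_uu _ phi2_s)).
Qed.
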